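(* Let $X$ be a nonempty set, $F:X\rightrightarrows Y$ with $F(x)\in\mathcal P^0_{\mp C}(Y)$ for all $x$, $\mp C$-closed and $\mp C$-bounded valued, let $e\in-\mathrm{int}(C)$, and assume $v_e(F(x))\neq v_e(F(y))$ for all $x,y\in X$ with $x\neq y$. If $x_0\in X$ is a maximal (resp. minimal) solution of the vector problem of maximizing (resp. minimizing) $v_e(F(x))$ over $x\in X$, then $x_0$ is an $s$-maximal (resp. $s$-minimal) solution of $(s\text{-}SOP)$.
   Context: $Y$ is a real topological linear space and $C\subset Y$ is a convex, closed, pointed cone with nonempty interior. $\mathbb R^2$ is ordered by $\mathbb R^2_+$. $\mathcal P^0_{\mp C}(Y)$ is the family of nonempty $A\subset Y$ with $A+C\neq Y$ and $A-C\neq Y$. $C$-closed: $A+C$ closed; $C$-bounded: for every neighborhood $U$ of $0$ there is $t>0$ with $A\subset tU+C$; $\mp C$-closed/bounded: holds for $C$ and $-C$. $A\preceq^s B$ iff $B\subset A+C$ and $A\subset B-C$. $x_0$ is an $s$-maximal (minimal) solution of $(s\text{-}SOP)$ if for every $x\in X$, $F(x_0)\preceq^sF(x)$ implies $F(x)\preceq^sF(x_0)$ (resp. $F(x)\preceq^sF(x_0)$ implies $F(x_0)\preceq^sF(x)$). For $e\in-\mathrm{int}(C)$: $\phi_{e,A}(y)=\inf\{t\in\mathbb R: y\in te+A+C\}$; $G^\ell_e(A,B)=\sup_{b\in B}\phi_{e,A}(b)$; $G^u_e(B,A):=-G^\ell_e(-B,-A)$; $v_e(A)=\big(-G^\ell_e(\{0\},A),\,G^u_e(A,\{0\})\big)$.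 For $f:X\to\mathbb R^2$, $\bar x$ is a maximal solution of $\max f$ if there is no $x$ with $f(\bar x)\le_{\mathbb R^2_+}f(x)$, $f(x)\ne f(\bar x)$; a minimal solution of $\min f$ if there is no $x$ with $f(x)\le_{\mathbb R^2_+}f(\bar x)$, $f(x)\ne f(\bar x)$. *)

From Stdlib Require Import Reals Classical ClassicalEpsilon.
Open Scope R_scope.

Record TVS := {
  carrier :> Type;
  vzero : carrier;
  vadd : carrier -> carrier -> carrier;
  vopp : carrier -> carrier;
  vscal : R -> carrier -> carrier;
  vadd_assoc : forall x y z, vadd x (vadd y z) = vadd (vadd x y) z;
  vadd_comm : forall x y, vadd x y = vadd y x;
  vadd_0 : forall x, vadd x vzero = x;
  vadd_opp : forall x, vadd x (vopp x) = vzero;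
  vscal_1 : forall x, vscal 1 x = x;
  vscal_assoc : forall a b x, vscal a (vscal b x) = vscal (a * b) x;
  vscal_distr_v : forall a x y, vscal a (vadd x y) = vadd (vscal a x) (vscal a y);
  vscal_distr_s : forall a b x, vscal (a + b) x = vadd (vscal a x) (vscal b x);
  vopen : (carrier -> Prop) -> Prop;
  vopen_full : vopen (fun _ => True);
  vopen_empty : vopen (fun _ => False);
  vopen_inter : forall U V, vopen U -> vopen V -> vopen (fun x => U x /\ V x);
  vopen_union : forall (I : Type) (U : I -> carrier -> Prop),
      (forall i, vopen (U i)) -> vopen (fun x => exists i, U i x);
  vadd_cont : forall U x y, vopen U -> U (vadd x y) ->
      exists V W, vopen V /\ vopen W /\ V x /\ W y /\
        forall x' y', V x' -> W y' -> U (vadd x' y');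
  vscal_cont : forall U r x, vopen U -> U (vscal r x) ->
      exists d V, 0 < d /\ vopen V /\ V x /\
        forall s x', Rabs (s - r) < d -> V x' -> U (vscal s x')
}.

Arguments vzero {_}.

Section Sets.
Variable Y : TVS.
Definition vset := Y -> Prop.

Definition set_eq (A B : vset) := forall y, A y <-> B y.
Definition vsubset (A B : vset) := forall y, A y -> B y.
Definition msum (A B : vset) : vset :=
  fun y => exists a b, A a /\ B b /\ y = vadd Y a b.
Definition setopp (A : vset) : vset := fun y => A (vopp Y y).
Definition sscal (t : R) (A : vset) : vset :=
  fun y => exists a, A a /\ y = vscal Y t a.
Definition sing (y0 : Y) : vset := fun y => y = y0.
Definition full_set : vset := fun _ => True.

Definition vclosed (A : vset) := vopen Y (fun y => ~ A y).
Definition vinterior (A : vset) : vset :=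
  fun y => exists U, vopen Y U /\ U y /\ vsubset U A.
Definition nbhd0 (U : vset) := exists V, vopen Y V /\ V vzero /\ vsubset V U.

Definition is_convex (C : vset) := forall x y l, 0 <= l <= 1 -> C x -> C y ->
  C (vadd Y (vscal Y l x) (vscal Y (1 - l) y)).
Definition is_cone (C : vset) := forall l x, 0 <= l -> C x -> C (vscal Y l x).
Definition is_pointed (C : vset) := set_eq (fun y => C y /\ setopp C y) (sing vzero).

Definition good_cone (C : vset) :=
  is_cone C /\ is_convex C /\ vclosed C /\ is_pointed C /\ exists y, vinterior C y.

Definition P0 (C A : vset) :=
  (exists a, A a) /\ ~ set_eq (msum A C) full_set /\ ~ set_eq (msum A (setopp C)) full_set.
Definition C_closed (C A : vset) := vclosed (msum A C).
Definition C_bounded (C A : vset) :=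
  forall U, nbhd0 U -> exists t, 0 < t /\ vsubset A (msum (sscal t U) C).
Definition mpC_closed (C A : vset) := C_closed C A /\ C_closed (setopp C) A.
Definition mpC_bounded (C A : vset) := C_bounded C A /\ C_bounded (setopp C) A.

Definition s_le (C A B : vset) := vsubset B (msum A C) /\ vsubset A (msum B (setopp C)).
End Sets.

Inductive ER := Fin (r : R) | PInf | MInf.

Definition ER_le (x y : ER) : Prop :=
  match x, y with
  | MInf, _ => True
  | _, PInf => True
  | Fin a, Fin b => a <= b
  | _, _ => False
  end.

Definition ER_opp (x : ER) : ER :=
  match x with Fin a => Fin (- a) | PInf => MInf | MInf => PInf end.

Definition ER_is_sup (S : ER -> Prop) (s : ER) :=
  (forall x, S x -> ER_le x s) /\ (forall u, (forall x, S x -> ER_le x u) -> ER_le s u).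

(* least upper bound in the complete lattice ER (sup of empty set = MInf) *)
Definition ER_sup (S : ER -> Prop) : ER :=
  epsilon (inhabits PInf) (fun s => ER_is_sup S s).
Definition ER_inf (S : ER -> Prop) : ER :=
  ER_opp (ER_sup (fun x => S (ER_opp x))).

Section Scal.
Variable Y : TVS.
Definition phi (C : vset Y) (e : Y) (A : vset Y) (y : Y) : ER :=
  ER_inf (fun x => exists t, x = Fin t /\ msum Y (msum Y (sing Y (vscal Y t e)) A) C y).
Definition Gl (C : vset Y) (e : Y) (A B : vset Y) : ER :=
  ER_sup (fun x => exists b, B b /\ x = phi C e A b).
Definition Gu (C : vset Y) (e : Y) (B A : vset Y) : ER :=
  ER_opp (Gl C e (setopp Y B) (setopp Y A)).
Definition ve (C : vset Y) (e : Y) (A : vset Y) : ER * ER :=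
  (ER_opp (Gl C e (sing Y vzero) A), Gu C e A (sing Y vzero)).
End Scal.

Definition le2 (p q : ER * ER) := ER_le (fst p) (fst q) /\ ER_le (snd p) (snd q).

Definition vec_maximal {X : Type} (f : X -> ER * ER) (x0 : X) :=
  ~ exists x, le2 (f x0) (f x) /\ f x <> f x0.
Definition vec_minimal {X : Type} (f : X -> ER * ER) (x0 : X) :=
  ~ exists x, le2 (f x) (f x0) /\ f x <> f x0.

Definition s_maximal {X : Type} {Y : TVS} (C : vset Y) (F : X -> vset Y) (x0 : X) :=
  forall x, s_le Y C (F x0) (F x) -> s_le Y C (F x) (F x0).
Definition s_minimal {X : Type} {Y : TVS} (C : vset Y) (F : X -> vset Y) (x0 : X) :=
  forall x, s_le Y C (F x) (F x0) -> s_le Y C (F x0) (F x).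

(* The map [v_e] is monotone from the set order [s_le] to the componentwise
   order: [B ⊆ A + C] makes every [phi_{e,{0}}(b)] dominated by some
   [phi_{e,{0}}(a)], and [A ⊆ B - C] gives [-A ⊆ -B + C], which can only lower
   [phi_{e,-B}(0)] below [phi_{e,-A}(0)].  Hence [F x0 ≼^s F x] yields
   [v_e(F x0) ≤ v_e(F x)]; optimality of [x0] together with injectivity of
   [x ↦ v_e(F x)] forces [x = x0], and [F x0 ≼^s F x0] holds trivially. *)
From Stdlib Require Import Reals.
From Stdlib Require Import Classical ClassicalEpsilon Lra.
Open Scope R_scope.
Set Implicit Arguments.

Section VectorAlgebra.
Variable Y : TVS.

Lemma vadd_cancel_l (a x y : Y) : vadd Y a x = vadd Y a y -> x = y.
Proof.
  intro H.
  assert (E : forall z : Y, vadd Y (vopp Y a) (vadd Y a z) = z).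
  { intro z. rewrite vadd_assoc, (vadd_comm Y (vopp Y a) a), vadd_opp,
      vadd_comm, vadd_0. reflexivity. }
  rewrite <- (E x), <- (E y), H. reflexivity.
Qed.

Lemma vadd_AC (a b c : Y) : vadd Y (vadd Y a b) c = vadd Y (vadd Y a c) b.
Proof. rewrite <- vadd_assoc, (vadd_comm Y b c), vadd_assoc. reflexivity. Qed.

Lemma vopp_involutive (x : Y) : vopp Y (vopp Y x) = x.
Proof.
  apply (vadd_cancel_l (vopp Y x)). rewrite vadd_opp, vadd_comm, vadd_opp.
  reflexivity.
Qed.

Lemma vopp_add (a b : Y) : vopp Y (vadd Y a b) = vadd Y (vopp Y a) (vopp Y b).
Proof.
  apply (vadd_cancel_l (vadd Y a b)). rewrite vadd_opp, vadd_assoc,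
    (vadd_AC a b (vopp Y a)), vadd_opp, (vadd_comm Y vzero b), vadd_0, vadd_opp.
  reflexivity.
Qed.

Lemma vopp_0 : vopp Y vzero = vzero.
Proof. apply (vadd_cancel_l vzero). rewrite vadd_opp, vadd_0. reflexivity. Qed.

Lemma vscal_0 (x : Y) : vscal Y 0 x = vzero.
Proof.
  apply (vadd_cancel_l (vscal Y 0 x)).
  rewrite <- vscal_distr_s, Rplus_0_r, vadd_0. reflexivity.
Qed.

Lemma convex_cone_add (C : vset Y) (a b : Y) :
  is_cone Y C -> is_convex Y C -> C a -> C b -> C (vadd Y a b).
Proof.
  intros Hcone Hconv Ha Hb.
  pose proof (Hcone 2 _ ltac:(lra) (Hconv a b (1/2) ltac:(lra) Ha Hb)) as Hmid.
  rewrite vscal_distr_v, !vscal_assoc in Hmid.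
  replace (2 * (1/2)) with 1 in Hmid by field.
  replace (2 * (1 - 1/2)) with 1 in Hmid by field.
  now rewrite !vscal_1 in Hmid.
Qed.

Lemma good_cone_add (C : vset Y) :
  good_cone Y C -> forall a b, C a -> C b -> C (vadd Y a b).
Proof. intros [Hcone [Hconv _]] a b. now apply convex_cone_add. Qed.

Lemma good_cone_0 (C : vset Y) : good_cone Y C -> C vzero.
Proof.
  intros [Hcone [_ [_ [_ [y [U [_ [Uy HU]]]]]]]].
  rewrite <- (vscal_0 y). exact (Hcone 0 y (Rle_refl 0) (HU y Uy)).
Qed.

Lemma subset_msum_opp (C A B : vset Y) :
  vsubset Y A (msum Y B (setopp Y C)) ->
  vsubset Y (setopp Y A) (msum Y (setopp Y B) C).
Proof.
  intros HAB y Hy. destruct (HAB _ Hy) as [b [c [Bb [Cc Heq]]]].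
  exists (vopp Y b), (vopp Y c). repeat split.
  - unfold setopp. now rewrite vopp_involutive.
  - exact Cc.
  - now rewrite <- vopp_add, <- Heq, vopp_involutive.
Qed.

Lemma s_le_refl (C A : vset Y) : good_cone Y C -> s_le Y C A A.
Proof.
  intros HC. pose proof (good_cone_0 HC) as C0.
  split; intros y Hy; exists y, vzero; repeat split; auto using vadd_0.
  unfold setopp. now rewrite vopp_0.
Qed.

End VectorAlgebra.

Lemma ER_le_refl x : ER_le x x.
Proof. destruct x; simpl; auto; lra. Qed.

Lemma ER_le_trans {x y z} : ER_le x y -> ER_le y z -> ER_le x z.
Proof. destruct x, y, z; simpl; auto; try lra; tauto. Qed.

Lemma ER_opp_le x y : ER_le x y -> ER_le (ER_opp y) (ER_opp x).
Proof. destruct x, y; simpl; auto; lra. Qed.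

Lemma ER_sup_exists (S : ER -> Prop) : exists s, ER_is_sup S s.
Proof.
  assert (Htop : (forall u, (forall x, S x -> ER_le x u) -> ER_le PInf u) ->
                 exists s, ER_is_sup S s).
  { intro Hmin. exists PInf. split; [intros [] _; simpl; auto | exact Hmin]. }
  destruct (classic (S PInf)) as [HP | HP].
  { apply Htop. intros u Hu. exact (Hu PInf HP). }
  destruct (classic (exists r, S (Fin r))) as [[r0 Hr0] | HF].
  - destruct (classic (bound (fun r => S (Fin r)))) as [Hb | Hb].
    + destruct (completeness _ Hb (ex_intro _ r0 Hr0)) as [l [Hl1 Hl2]].
      exists (Fin l). split.
      * intros [] Hx; simpl; auto.
      * intros [] Hu; simpl; auto.
        -- apply Hl2. intros x Hx. exact (Hu (Fin x) Hx).
        -- exact (Hu (Fin r0) Hr0).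
    + apply Htop. intros [] Hu; simpl; auto.
      * apply Hb. exists r. intros x Hx. exact (Hu (Fin x) Hx).
      * exact (Hu (Fin r0) Hr0).
  - exists MInf. split; [|intros u _; exact I].
    intros [] Hx; simpl; auto. apply HF; eauto.
Qed.

Lemma ER_sup_spec (S : ER -> Prop) : ER_is_sup S (ER_sup S).
Proof. unfold ER_sup. apply epsilon_spec, ER_sup_exists. Qed.

Lemma ER_sup_le (S T : ER -> Prop) :
  (forall x, S x -> exists y, T y /\ ER_le x y) -> ER_le (ER_sup S) (ER_sup T).
Proof.
  intros H. destruct (ER_sup_spec S) as [_ HS], (ER_sup_spec T) as [HT _].
  apply HS. intros x Hx. destruct (H x Hx) as [y [Ty Hle]].
  exact (ER_le_trans Hle (HT y Ty)).
Qed.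

Lemma ER_inf_le_subset (S T : ER -> Prop) :
  (forall x, S x -> T x) -> ER_le (ER_inf T) (ER_inf S).
Proof.
  intros H. apply ER_opp_le, ER_sup_le.
  intros x Hx. exists x. split; [exact (H _ Hx) | apply ER_le_refl].
Qed.

Section ScalarizationMonotone.
Variables (Y : TVS) (C : vset Y) (e : Y).
Hypothesis C_add : forall a b, C a -> C b -> C (vadd Y a b).

Lemma phi_add_cone_le (D : vset Y) (a c : Y) :
  C c -> ER_le (phi Y C e D (vadd Y a c)) (phi Y C e D a).
Proof.
  intros Cc. apply ER_inf_le_subset. intros x [t [-> [p [c' [Hp [Cc' ->]]]]]].
  exists t. split; [reflexivity|].
  exists p, (vadd Y c' c). repeat split; auto.
  now rewrite vadd_assoc.
Qed.

Lemma phi_le_subset_msum (A B : vset Y) (y : Y) :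
  vsubset Y A (msum Y B C) -> ER_le (phi Y C e B y) (phi Y C e A y).
Proof.
  intros HAB. apply ER_inf_le_subset.
  intros x [t [-> [p [c [Hp [Cc ->]]]]]].
  destruct Hp as [u [a [Hu [Aa ->]]]].
  destruct (HAB a Aa) as [b [c' [Bb [Cc' ->]]]].
  exists t. split; [reflexivity|].
  exists (vadd Y u b), (vadd Y c' c). repeat split; auto.
  - now exists u, b.
  - now rewrite !vadd_assoc.
Qed.

Lemma Gl_le_msum_right (D A B : vset Y) :
  vsubset Y B (msum Y A C) -> ER_le (Gl Y C e D B) (Gl Y C e D A).
Proof.
  intros HBA. apply ER_sup_le. intros x [b [Bb ->]].
  destruct (HBA b Bb) as [a [c [Aa [Cc ->]]]].
  exists (phi Y C e D a). split; [now exists a | exact (phi_add_cone_le D a Cc)].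
Qed.

Lemma Gl_le_msum_left (A B E : vset Y) :
  vsubset Y A (msum Y B C) -> ER_le (Gl Y C e B E) (Gl Y C e A E).
Proof.
  intros HAB. apply ER_sup_le. intros x [y [Ey ->]].
  exists (phi Y C e A y). split; [now exists y | exact (phi_le_subset_msum y HAB)].
Qed.

End ScalarizationMonotone.

Lemma ve_le2_of_s_le (Y : TVS) (C : vset Y) (e : Y) (A B : vset Y) :
  good_cone Y C -> s_le Y C A B -> le2 (ve Y C e A) (ve Y C e B).
Proof.
  intros HC [HBA HAB]. pose proof (good_cone_add HC) as C_add.
  split; apply ER_opp_le.
  - exact (Gl_le_msum_right e C_add _ HBA).
  - exact (Gl_le_msum_left e C_add _ (subset_msum_opp HAB)).
Qed.

Section OptimalityInjective.
Variables (X : Type) (f : X -> ER * ER) (x0 : X).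
Hypothesis f_inj : forall x y, x <> y -> f x <> f y.

Lemma vec_maximal_le2_eq {x} : vec_maximal f x0 -> le2 (f x0) (f x) -> x = x0.
Proof.
  intros Hmax Hle. apply NNPP. intros Hne.
  apply Hmax. exists x. split; [exact Hle | exact (f_inj Hne)].
Qed.

Lemma vec_minimal_le2_eq {x} : vec_minimal f x0 -> le2 (f x) (f x0) -> x = x0.
Proof.
  intros Hmin Hle. apply NNPP. intros Hne.
  apply Hmin. exists x. split; [exact Hle | exact (f_inj Hne)].
Qed.

End OptimalityInjective.

Theorem theorem9 (Y : TVS) (C : vset Y) (X : Type) (F : X -> vset Y) (e : Y) (x0 : X) :
  good_cone Y C ->
  inhabited X ->
  (forall x, P0 Y C (F x) /\ mpC_closed Y C (F x) /\ mpC_bounded Y C (F x)) ->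
  vinterior Y C (vopp Y e) ->
  (forall x y, x <> y -> ve Y C e (F x) <> ve Y C e (F y)) ->
  (vec_maximal (fun x => ve Y C e (F x)) x0 -> s_maximal C F x0) /\
  (vec_minimal (fun x => ve Y C e (F x)) x0 -> s_minimal C F x0).
Proof.
  intros HC _ _ _ Hinj. split.
  - intros Hmax x Hle.
    rewrite (vec_maximal_le2_eq Hinj Hmax (ve_le2_of_s_le e HC Hle)).
    exact (s_le_refl _ HC).
  - intros Hmin x Hle.
    rewrite (vec_minimal_le2_eq Hinj Hmin (ve_le2_of_s_le e HC Hle)).
    exact (s_le_refl _ HC).
Qed.
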